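(* Let $f\in R=D[t;\sigma,\delta]$ be monic of degree $m\ge 2$. Then $f$ is right semi-invariant if and only if $D\subseteq \mathrm{Nuc}_r(S_f)$. In particular, if $f$ is right semi-invariant, then either $\mathrm{Nuc}(S_f)=D$ or $S_f$ is associative.
   Context: $D$ is an associative division ring with center $F$, $\sigma$ is a ring endomorphism of $D$ and $\delta$ is a left $\sigma$-derivation of $D$ (additive with $\delta(ab)=\sigma(a)\delta(b)+\delta(a)b$). $R=D[t;\sigma,\delta]$ is the skew polynomial ring of polynomials $\sum a_it^i$, $a_i\in D$, with multiplication determined by $ta=\sigma(a)t+\delta(a)$. For monic $f$ of degree $m$, every $g\in R$ can be written uniquely as $g=qf+r$ with $\deg r<m$; write $r=g\ \mathrm{mod}_r f$. The Petit algebra $S_f$ is the set of elements of $R$ of degree $<m$ with multiplication $g\circ h=gh\ \mathrm{mod}_r f$; it is a unital nonassociative ring. For a ring $A$ with associator $[x,y,z]=(xy)z-x(yz)$: $\mathrm{Nuc}_l(A)=\{x:[x,A,A]=0\}$, $\mathrm{Nuc}_m(A)=\{x:[A,x,A]=0\}$, $\mathrm{Nuc}_r(A)=\{x:[A,A,x]=0\}$, and $\mathrm{Nuc}(A)$ is their intersection. $D$ is viewed inside $S_f$ as the polynomials of degree $0$. $f$ is called right semi-invariant if $fD\subseteq Df$, i.e. for every $a\in D$ there is $b\in D$ with $f(t)a=bf(t)$. *)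

From HB Require Import structures.
From mathcomp Require Import all_boot all_order all_algebra.
Set Implicit Arguments. Unset Strict Implicit. Unset Printing Implicit Defensive.
Import GRing.Theory.
Local Open Scope ring_scope.

Section Skew.
Variable D : unitRingType.
Variable sigma : D -> D.
Variable delta : D -> D.

(* A skew polynomial sum_i a_i t^i is represented by its coefficient list,
   i.e. by an element of {poly D}; only the multiplication differs. *)

(* left multiplication by t:  t * (sum a_i t^i) = sum (sigma a_i t^(i+1) + delta a_i t^i) *)
Definition skew_mulX (p : {poly D}) : {poly D} :=
  map_poly sigma p * 'X + map_poly delta p.

Definition skew_mul (g h : {poly D}) : {poly D} :=
  \sum_(i < size g) (g`_(nat_of_ord i))%:P * iter (nat_of_ord i) skew_mulX h.

Fixpoint skew_rmod_rec (f : {poly D}) (n : nat) (g : {poly D}) : {poly D} :=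
  match n with
  | 0 => g
  | n'.+1 =>
      if (size g < size f)%N then g
      else skew_rmod_rec f n'
             (g - skew_mul ((lead_coef g)%:P * 'X^(size g - size f)) f)
  end.

Definition skew_rmod (f g : {poly D}) : {poly D} := skew_rmod_rec f (size g) g.

(* carrier of the Petit algebra S_f: polynomials of degree < deg f *)
Definition petit_set (f : {poly D}) : pred {poly D} := fun p => (size p < size f)%N.

Definition petit_mul (f g h : {poly D}) : {poly D} := skew_rmod f (skew_mul g h).

Definition petit_assoc (f x y z : {poly D}) : {poly D} :=
  petit_mul f (petit_mul f x y) z - petit_mul f x (petit_mul f y z).

Definition nuc_l (f x : {poly D}) : Prop :=
  forall y z, petit_set f y -> petit_set f z -> petit_assoc f x y z = 0.
Definition nuc_m (f x : {poly D}) : Prop :=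
  forall y z, petit_set f y -> petit_set f z -> petit_assoc f y x z = 0.
Definition nuc_r (f x : {poly D}) : Prop :=
  forall y z, petit_set f y -> petit_set f z -> petit_assoc f y z x = 0.
Definition nuc (f x : {poly D}) : Prop := nuc_l f x /\ nuc_m f x /\ nuc_r f x.

Definition petit_associative (f : {poly D}) : Prop :=
  forall x y z, petit_set f x -> petit_set f y -> petit_set f z ->
    petit_assoc f x y z = 0.

Definition right_semi_invariant (f : {poly D}) : Prop :=
  forall a : D, exists b : D, skew_mul f a%:P = skew_mul b%:P f.

End Skew.

From HB Require Import structures.
From mathcomp Require Import all_boot all_order all_algebra zify.
From Stdlib Require Import Classical.
Import GRing.Theory.
Local Open Scope ring_scope.

(* Let R f be the left ideal {q f} and m = deg f.  If g h = q f + r with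
   deg r < m, the associator [g, h, k] in S_f equals -(q (f k) mod_r f), so
   f k in R f puts k in Nuc_r(S_f).  Conversely t^(m-1) t = 1 f + (t^m - f)
   gives [t^(m-1), t, k] = -(f k mod_r f), and for a constant a, f a in R f
   means f a = b f by degree.  Constants always lie in Nuc_l and Nuc_m.  If
   some x of degree d >= 1 lies in Nuc_m(S_f), then t^(m-d) x = c f + r with
   c = sigma^(m-d) (lc x) a unit, so [t^(m-d), x, k] = -c (f k mod_r f) forces
   f k in R f for all k, and then every associator vanishes. *)

Lemma size_poly_eqS {R : nzRingType} {p : {poly R}} {n} :
  (size p <= n.+1)%N -> p`_n != 0 -> size p = n.+1.
Proof.
move=> le_p pn_neq0; apply/eqP; rewrite eqn_leq le_p /= ltnNge.
by apply: contra pn_neq0 => /(nth_default 0) ->.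
Qed.

Lemma size_sub_same_lead {R : nzRingType} {p q : {poly R}} :
  p != 0 -> size q = size p -> lead_coef q = lead_coef p ->
  (size (p - q)%R < size p)%N.
Proof.
move=> p_neq0 size_qp lead_qp; rewrite (polySpred p_neq0) ltnS.
apply/leq_sizeP => j; rewrite leq_eqVlt => /orP [/eqP <-|lt_j].
  by rewrite coefB -lead_coefE -size_qp -lead_coefE lead_qp subrr.
by rewrite coefB !nth_default ?subrr // ?size_qp (polySpred p_neq0).
Qed.

Section SkewPolynomial.
Context {D : unitRingType} {sigma : {rmorphism D -> D}} {delta : D -> D}.
Hypothesis delta_add : forall a b : D, delta (a + b) = delta a + delta b.
Hypothesis delta_mul : forall a b : D, delta (a * b) = sigma a * delta b + delta a * b.

Implicit Types (a : D) (p q r g h k : {poly D}).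

Local Notation mulX := (skew_mulX sigma delta).
Local Notation "g ** h" := (skew_mul sigma delta g h) (at level 40, left associativity).

Lemma delta0 : delta 0 = 0.
Proof. by apply: (addrI (delta 0)); rewrite -delta_add !addr0. Qed.

Lemma delta1 : delta 1 = 0.
Proof.
have := delta_mul 1 1; rewrite !mulr1 rmorph1 mul1r => delta11.
by apply: (addrI (delta 1)); rewrite addr0 -delta11.
Qed.

Lemma coef_mulX p i :
  (mulX p)`_i = (if i is i'.+1 then sigma p`_i' else 0) + delta p`_i.
Proof. by rewrite coefD coefMX !coef_map_id0 ?delta0 ?rmorph0 //; case: i. Qed.

Lemma mulX0 : mulX 0 = 0.
Proof. by rewrite /skew_mulX !map_poly0 mul0r addr0. Qed.

Lemma mulXD p q : mulX (p + q) = mulX p + mulX q.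
Proof.
apply/polyP => i; rewrite coefD !coef_mulX !coefD delta_add.
by case: i => [|i]; rewrite ?add0r // coefD rmorphD addrACA.
Qed.

Lemma mulXN p : mulX (- p) = - mulX p.
Proof. by apply: (addrI (mulX p)); rewrite -mulXD !subrr mulX0. Qed.

Lemma mulXC a p : mulX (a%:P * p) = (sigma a)%:P * mulX p + (delta a)%:P * p.
Proof.
apply/polyP => -[|i]; rewrite coef_mulX coefD !coefCM !coef_mulX delta_mul mulrDr.
  by rewrite !add0r mulr0 add0r.
by rewrite rmorphM addrA.
Qed.

Lemma mulXXn i : mulX 'X^i = 'X^(i.+1).
Proof.
rewrite /skew_mulX map_polyXn exprSr; have -> : map_poly delta ('X^i : {poly D}) = 0.
  apply/polyP => j; rewrite coef_map_id0 ?delta0 // coefXn coef0.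
  by case: (j == i); rewrite ?delta1 ?delta0.
by rewrite addr0.
Qed.

Lemma iter_mulX0 n : iter n mulX 0 = 0.
Proof. by elim: n => //= n ->; rewrite mulX0. Qed.

Lemma iter_mulXD n p q : iter n mulX (p + q) = iter n mulX p + iter n mulX q.
Proof. by elim: n => //= n ->; rewrite mulXD. Qed.

Lemma iter_mulXN n p : iter n mulX (- p) = - iter n mulX p.
Proof. by elim: n => //= n ->; rewrite mulXN. Qed.

Lemma skew_mulE {n g} h : (size g <= n)%N ->
  g ** h = \sum_(i < n) (g`_i)%:P * iter i mulX h.
Proof.
move=> le_g_n; rewrite /skew_mul (big_ord_widen _ (fun i => (g`_i)%:P * iter i mulX h) le_g_n).
rewrite big_mkcond; apply: eq_bigr => i _; case: ltnP => // le_g_i.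
by rewrite nth_default // mul0r.
Qed.

Lemma skew_mul0l h : 0 ** h = 0.
Proof. by rewrite /skew_mul size_poly0 big_ord0. Qed.

Lemma skew_mulDl g1 g2 h : (g1 + g2) ** h = g1 ** h + g2 ** h.
Proof.
have le_g12 : (size (g1 + g2)%R <= size g1 + size g2)%N.
  by apply: leq_trans (size_polyD _ _) _; rewrite geq_max leq_addr leq_addl.
rewrite (skew_mulE _ le_g12) (skew_mulE _ (leq_addr (size g2) _)).
rewrite (skew_mulE _ (leq_addl (size g1) _)) -big_split.
by apply: eq_bigr => i _; rewrite coefD polyCD mulrDl.
Qed.

Lemma skew_mulNl g h : (- g) ** h = - (g ** h).
Proof. by apply: (addrI (g ** h)); rewrite -skew_mulDl !subrr skew_mul0l. Qed.

Lemma skew_mulBl g1 g2 h : (g1 - g2) ** h = g1 ** h - g2 ** h.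
Proof. by rewrite skew_mulDl skew_mulNl. Qed.

Lemma skew_mulCl a g h : (a%:P * g) ** h = a%:P * (g ** h).
Proof.
have le_ag : (size (a%:P * g)%R <= size g)%N by rewrite mul_polyC size_scale_leq.
rewrite (skew_mulE _ le_ag) (skew_mulE _ (leqnn _)) mulr_sumr.
by apply: eq_bigr => i _; rewrite coefCM polyCM mulrA.
Qed.

Lemma skew_mulBr g h1 h2 : g ** (h1 - h2) = g ** h1 - g ** h2.
Proof.
rewrite /skew_mul -sumrB; apply: eq_bigr => i _.
by rewrite iter_mulXD iter_mulXN mulrBr.
Qed.

Lemma skew_mulC a h : a%:P ** h = a%:P * h.
Proof. by rewrite (skew_mulE _ (size_polyC_leq1 a)) big_ord1 coefC. Qed.

Lemma skew_mul1l h : 1 ** h = h.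
Proof. by rewrite -polyC1 skew_mulC mul1r. Qed.

Lemma skew_mulXn j h : 'X^j ** h = iter j mulX h.
Proof.
have le_Xj : (size ('X^j : {poly D}) <= j.+1)%N by rewrite size_polyXn.
rewrite (skew_mulE _ le_Xj) big_ord_recr /= coefXn eqxx mul1r.
rewrite big1 ?add0r // => i _.
by rewrite coefXn (ltn_eqF (ltn_ord i)) mul0r.
Qed.

Lemma skew_mulXnXn i j : 'X^i ** 'X^j = 'X^(i + j).
Proof. by rewrite skew_mulXn; elim: i => //= i ->; rewrite mulXXn addSn. Qed.

Lemma size_mulX_leq p : (size (mulX p) <= (size p).+1)%N.
Proof.
apply/leq_sizeP => -[|j] lt_j; rewrite coef_mulX // !nth_default ?rmorph0 ?delta0 ?addr0 //.
exact: ltnW.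
Qed.

Lemma skew_mul_mulX p h : mulX p ** h = mulX (p ** h).
Proof.
rewrite (skew_mulE _ (size_mulX_leq p)) (skew_mulE _ (leqnn _)) (big_morph mulX mulXD mulX0).
under [LHS]eq_bigr => i _ do rewrite coef_mulX polyCD mulrDl.
rewrite big_split big_ord_recl big_ord_recr /= nth_default // delta0 !mul0r add0r addr0.
by rewrite -big_split; apply: eq_bigr => i _; rewrite mulXC.
Qed.

Lemma skew_mulA g h k : (g ** h) ** k = g ** (h ** k).
Proof.
rewrite [g ** h]/skew_mul (big_morph (fun x => x ** k) (fun x y => skew_mulDl x y k) (skew_mul0l k)).
apply: eq_bigr => i _; rewrite skew_mulCl; congr (_ * _).
by elim: (nat_of_ord i) => //= n <-; rewrite skew_mul_mulX.
Qed.

Lemma size_iter_mulX_leq n p : (size (iter n mulX p) <= size p + n)%N.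
Proof.
elim: n => [|n IH] /=; first by rewrite addn0.
by rewrite addnS (leq_trans (size_mulX_leq _)).
Qed.

Lemma iter_sigma0 n : iter n sigma 0 = 0.
Proof. by elim: n => //= n ->; rewrite rmorph0. Qed.

Lemma iter_sigma1 n : iter n sigma 1 = 1.
Proof. by elim: n => //= n ->; rewrite rmorph1. Qed.

Lemma coef_iter_mulX n p :
  (iter n mulX p)`_((size p).-1 + n) = iter n sigma (lead_coef p).
Proof.
have [->|p_neq0] := eqVneq p 0; first by rewrite iter_mulX0 coef0 lead_coef0 iter_sigma0.
elim: n => [|n IH] /=; first by rewrite addn0.
rewrite addnS coef_mulX IH nth_default ?delta0 ?addr0 //.
by rewrite -addSn -(polySpred p_neq0) size_iter_mulX_leq.
Qed.

Lemma size_iter_mulX n p : iter n sigma (lead_coef p) != 0 ->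
  size (iter n mulX p) = (size p + n)%N.
Proof.
move=> lead_neq0; have p_neq0 : p != 0.
  by apply: contra_neq lead_neq0 => ->; rewrite lead_coef0 iter_sigma0.
rewrite (polySpred p_neq0) addSn; apply: size_poly_eqS; last by rewrite coef_iter_mulX.
by rewrite -addSn -(polySpred p_neq0) size_iter_mulX_leq.
Qed.

Lemma lead_coef_iter_mulX n p : iter n sigma (lead_coef p) != 0 ->
  lead_coef (iter n mulX p) = iter n sigma (lead_coef p).
Proof.
move=> lead_neq0; have p_neq0 : p != 0.
  by apply: contra_neq lead_neq0 => ->; rewrite lead_coef0 iter_sigma0.
by rewrite lead_coefE size_iter_mulX // (polySpred p_neq0) addSn coef_iter_mulX.
Qed.

Lemma size_skew_mul_leq g h : (size (g ** h) <= (size g + size h).-1)%N.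
Proof.
apply: (big_ind (fun p => size p <= (size g + size h).-1)%N).
- by rewrite size_poly0.
- by move=> p q p_le q_le; rewrite (leq_trans (size_polyD p q)) // geq_max p_le q_le.
move=> i _; rewrite mul_polyC (leq_trans (size_scale_leq _ _)) //.
rewrite (leq_trans (size_iter_mulX_leq _ _)) //; have := ltn_ord i; lia.
Qed.

Section MonicModulus.
Context {f : {poly D}}.
Hypothesis f_monic : f \is monic.

Local Notation rmod := (skew_rmod sigma delta f).

Lemma size_monic_gt0 : (0 < size f)%N.
Proof. by rewrite size_poly_gt0 monic_neq0. Qed.

Lemma size_iter_mulX_monic n : size (iter n mulX f) = (size f + n)%N.
Proof. by rewrite size_iter_mulX // (monicP f_monic) iter_sigma1 oner_neq0. Qed.

Lemma iter_mulX_monic n : iter n mulX f \is monic.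
Proof.
by rewrite monicE lead_coef_iter_mulX (monicP f_monic) iter_sigma1 ?oner_neq0.
Qed.

Lemma size_skew_mul_monic q : q != 0 -> size (q ** f) = ((size q).-1 + size f)%N.
Proof.
move=> q_neq0; rewrite (skew_mulE _ (leqnn _)) (polySpred q_neq0) big_ord_recr /=.
set s := (size q).-1.
have lead_q : q`_s != 0 by rewrite -lead_coef_eq0 in q_neq0.
have size_top : size ((q`_s)%:P * iter s mulX f) = (size f + s)%N.
  by rewrite size_Mmonic ?polyC_eq0 ?iter_mulX_monic // size_polyC lead_q size_iter_mulX_monic.
have size_rest : (size (\sum_(i < s) (q`_i)%:P * iter i mulX f)%R < size f + s)%N.
  apply: (big_ind (fun p => size p < size f + s)%N).
  - by rewrite size_poly0 addn_gt0 size_monic_gt0.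
  - by move=> p r p_lt r_lt; rewrite (leq_ltn_trans (size_polyD p r)) // gtn_max p_lt r_lt.
  move=> i _; rewrite mul_polyC (leq_ltn_trans (size_scale_leq _ _)) //.
  by rewrite size_iter_mulX_monic ltn_add2l.
by rewrite addrC size_polyDl size_top // addnC.
Qed.

Lemma skew_mul_monic_small q : (size (q ** f) < size f)%N -> q = 0.
Proof.
by apply: contraTeq => q_neq0; rewrite size_skew_mul_monic // -leqNgt leq_addl.
Qed.

Lemma rmod_rec_spec n g :
  (exists q, skew_rmod_rec sigma delta f n g = g - q ** f) /\
  ((size g < n + size f)%N -> (size (skew_rmod_rec sigma delta f n g) < size f)%N).
Proof.
elim: n g => [|n IH] g /=.
  by split=> //; exists 0; rewrite skew_mul0l subr0.
case: ltnP => [g_small|f_le_g].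
  by split=> //; exists 0; rewrite skew_mul0l subr0.
set c := lead_coef g; set k := (size g - size f)%N.
have [[q g'_mod] size_g'] := IH (g - (c%:P * 'X^k) ** f).
split.
  by exists (c%:P * 'X^k + q); rewrite g'_mod skew_mulDl opprD addrA.
move=> g_lt; apply: size_g'.
have g_neq0 : g != 0 by rewrite -size_poly_gt0 (leq_trans size_monic_gt0).
have c_neq0 : c != 0 by rewrite lead_coef_eq0.
have size_cf : size (c%:P * iter k mulX f) = size g.
  rewrite size_Mmonic ?polyC_eq0 ?iter_mulX_monic //.
  by rewrite size_polyC c_neq0 size_iter_mulX_monic subnKC.
have lead_cf : lead_coef (c%:P * iter k mulX f) = c.
  by rewrite lead_coef_Mmonic ?iter_mulX_monic // lead_coefC.
have := size_sub_same_lead g_neq0 size_cf lead_cf.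
rewrite skew_mulCl skew_mulXn => /leq_trans; apply; by rewrite -ltnS -addSn.
Qed.

Lemma rmod_spec g : exists q, rmod g = g - q ** f.
Proof. exact: (rmod_rec_spec (size g) g).1. Qed.

Lemma size_rmod g : (size (rmod g) < size f)%N.
Proof. by apply: (rmod_rec_spec (size g) g).2; rewrite -addn1 leq_add2l size_monic_gt0. Qed.

Lemma rmod_eq g q r : (size r < size f)%N -> g = q ** f + r -> rmod g = r.
Proof.
move=> r_small g_eq; have [q' g_mod] := rmod_spec g.
have q_q' : (q - q') ** f = rmod g - r by rewrite g_mod {1}g_eq skew_mulBl addrAC addrK.
have size_diff : (size (rmod g - r)%R < size f)%N.
  by rewrite (leq_ltn_trans (size_polyD _ _)) // size_polyN gtn_max size_rmod.
apply/eqP; rewrite -subr_eq0 -q_q' (skew_mul_monic_small (q - q')) ?skew_mul0l //.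
by rewrite q_q'.
Qed.

Lemma rmod_small r : (size r < size f)%N -> rmod r = r.
Proof. by move=> r_small; apply: (rmod_eq _ 0); rewrite ?skew_mul0l ?add0r. Qed.

Lemma rmod_skew_mul q : rmod (q ** f) = 0.
Proof. by apply: (rmod_eq _ q); rewrite ?size_poly0 ?size_monic_gt0 ?addr0. Qed.

Lemma rmod_eq0P g : rmod g = 0 <-> exists q, g = q ** f.
Proof.
split=> [|[q ->]]; last exact: rmod_skew_mul.
by have [q ->] := rmod_spec g => /eqP; rewrite subr_eq0 => /eqP; exists q.
Qed.

Lemma rmodB g h : rmod (g - h) = rmod g - rmod h.
Proof.
have [q g_mod] := rmod_spec g; have [q' h_mod] := rmod_spec h.
apply: (rmod_eq _ (q - q')).
  by rewrite (leq_ltn_trans (size_polyD _ _)) // size_polyN gtn_max !size_rmod.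
by rewrite g_mod h_mod skew_mulBl opprB addrACA addKr (addrC (q ** f)) subrK.
Qed.

Lemma rmodCl a g : rmod (a%:P * g) = a%:P * rmod g.
Proof.
have [q g_mod] := rmod_spec g; apply: (rmod_eq _ (a%:P * q)).
  by rewrite mul_polyC (leq_ltn_trans (size_scale_leq _ _)) ?size_rmod.
by rewrite g_mod skew_mulCl mulrBr addrC subrK.
Qed.

Lemma petit_assoc_rdiv {y z q} : rmod (y ** z) = y ** z - q ** f ->
  forall w, petit_assoc sigma delta f y z w = - rmod (q ** (f ** w)).
Proof.
move=> yz_mod w; have [q' zw_mod] := rmod_spec (z ** w).
rewrite /petit_assoc /petit_mul yz_mod zw_mod skew_mulBl skew_mulBr !skew_mulA.
by rewrite -(skew_mulA y q' f) !rmodB rmod_skew_mul subr0 addrAC subrr add0r.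
Qed.

Lemma petit_assoc_small y z w :
  (size (y ** z) < size f)%N -> petit_assoc sigma delta f y z w = 0.
Proof.
move=> yz_small.
have yz_mod : rmod (y ** z) = y ** z - 0 ** f by rewrite skew_mul0l subr0 rmod_small.
by rewrite (petit_assoc_rdiv yz_mod) skew_mul0l rmod_small ?oppr0 // size_poly0 size_monic_gt0.
Qed.

Lemma nuc_r_of_rmod {w} : rmod (f ** w) = 0 -> nuc_r sigma delta f w.
Proof.
move=> /rmod_eq0P [q' fw_eq] y z _ _; have [q yz_mod] := rmod_spec (y ** z).
by rewrite (petit_assoc_rdiv yz_mod) fw_eq -skew_mulA rmod_skew_mul oppr0.
Qed.

Lemma nuc_l_const a : nuc_l sigma delta f a%:P.
Proof.
move=> y z y_small _; apply: petit_assoc_small.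
by rewrite skew_mulC mul_polyC (leq_ltn_trans (size_scale_leq _ _)).
Qed.

Lemma nuc_m_const a : nuc_m sigma delta f a%:P.
Proof.
move=> y z y_small _; apply: petit_assoc_small.
have := size_polyC_leq1 a; have := size_skew_mul_leq y a%:P; rewrite /petit_set in y_small; lia.
Qed.

Lemma right_semi_invariantE :
  right_semi_invariant sigma delta f <-> forall a, rmod (f ** a%:P) = 0.
Proof.
split=> [f_rsi a|fa_mod a]; first by have [b ->] := f_rsi a; apply: rmod_skew_mul.
have [q fa_eq] := (rmod_eq0P _).1 (fa_mod a); exists q`_0.
rewrite fa_eq -size1_polyC //; have [->|q_neq0] := eqVneq q 0; first by rewrite size_poly0.
have := size_skew_mul_leq f a%:P; have := size_polyC_leq1 a; have := size_monic_gt0.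
by rewrite fa_eq size_skew_mul_monic //; lia.
Qed.

Lemma nuc_const a : right_semi_invariant sigma delta f -> nuc sigma delta f a%:P.
Proof.
move=> /right_semi_invariantE fa_mod.
by split; [|split]; [apply: nuc_l_const | apply: nuc_m_const | apply: nuc_r_of_rmod].
Qed.

Section DegreeAtLeastTwo.
Hypothesis f_deg : (2 < size f)%N.

Lemma rmod_of_nuc_r w : nuc_r sigma delta f w -> rmod (f ** w) = 0.
Proof.
move=> w_nuc; set m := (size f).-1.
have size_f : size f = m.+1 by rewrite /m prednK // size_monic_gt0.
have Xm_mod : rmod ('X^(m.-1) ** 'X) = 'X^(m.-1) ** 'X - 1 ** f.
  have -> : 'X^(m.-1) ** 'X = 'X^m.
    by rewrite -[X in _ ** X]expr1 skew_mulXnXn addn1 prednK // -ltnS -size_f ltnW.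
  apply: (rmod_eq _ 1); last by rewrite addrC subrK.
  have size_Xm : size ('X^m : {poly D}) = size f by rewrite size_polyXn.
  rewrite skew_mul1l -[X in (_ < X)%N]size_Xm.
  apply: size_sub_same_lead; rewrite ?monic_neq0 ?monicXn //.
  by rewrite lead_coefXn (monicP f_monic).
have := w_nuc ('X^(m.-1)) 'X; rewrite (petit_assoc_rdiv Xm_mod) skew_mul1l => w_assoc.
by apply/eqP; rewrite -oppr_eq0 w_assoc // /petit_set ?size_polyXn ?size_polyX; lia.
Qed.

Lemma right_semi_invariant_nuc_r :
  right_semi_invariant sigma delta f <-> forall a, nuc_r sigma delta f a%:P.
Proof.
rewrite right_semi_invariantE.
by split=> nuc_a a; [apply: nuc_r_of_rmod | apply: rmod_of_nuc_r].
Qed.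

End DegreeAtLeastTwo.

Section DivisionRing.
Hypothesis D_div : forall x : D, x != 0 -> x \is a GRing.unit.

Lemma iter_sigma_neq0 n a : a != 0 -> iter n sigma a != 0.
Proof.
elim: n => //= n IH /IH /D_div a_unit; apply/eqP => sigma_a0.
by move: (rmorph_unit sigma a_unit); rewrite sigma_a0 unitr0.
Qed.

Lemma rmod_of_nuc_m {x w} : petit_set f x -> nuc_m sigma delta f x -> (1 < size x)%N ->
  petit_set f w -> rmod (f ** w) = 0.
Proof.
rewrite /petit_set => x_small x_nuc x_gt1 w_small.
set j := (size f - size x)%N; set c := iter j sigma (lead_coef x).
have size_f : size f = (size x + j)%N by rewrite subnKC // ltnW.
have c_neq0 : c != 0 by rewrite iter_sigma_neq0 // lead_coef_eq0 -size_poly_gt0 ltnW.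
have Xjx_mod : rmod ('X^j ** x) = 'X^j ** x - c%:P ** f.
  apply: (rmod_eq _ c%:P); last by rewrite addrC subrK.
  have x_neq0 : x != 0 by rewrite -size_poly_gt0 ltnW.
  rewrite skew_mulXn skew_mulC size_f -size_iter_mulX //.
  apply: size_sub_same_lead.
  - by rewrite -size_poly_gt0 size_iter_mulX // addn_gt0 size_poly_gt0 x_neq0.
  - by rewrite size_Mmonic ?polyC_eq0 // size_polyC c_neq0 size_iter_mulX // -size_f.
  - by rewrite lead_coef_Mmonic // lead_coefC lead_coef_iter_mulX.
have Xj_small : petit_set f 'X^j by rewrite /petit_set size_polyXn; lia.
have := x_nuc _ _ Xj_small w_small; rewrite (petit_assoc_rdiv Xjx_mod) skew_mulC rmodCl.
move=> /eqP; rewrite oppr_eq0 => /eqP c_fw.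
by rewrite -[rmod _]mul1r -polyC1 -(mulVr (D_div _ c_neq0)) polyCM -mulrA c_fw mulr0.
Qed.

Lemma petit_associative_of_nuc_m {x} : petit_set f x -> nuc_m sigma delta f x ->
  (1 < size x)%N -> petit_associative sigma delta f.
Proof.
move=> x_small x_nuc x_gt1 y z w y_small z_small w_small.
exact: nuc_r_of_rmod (rmod_of_nuc_m x_small x_nuc x_gt1 w_small) y z y_small z_small.
Qed.

End DivisionRing.

End MonicModulus.
End SkewPolynomial.

Theorem mainTheorem1 (D : unitRingType)
  (D_div : forall x : D, x != 0 -> x \is a GRing.unit)
  (sigma : {rmorphism D -> D}) (delta : D -> D)
  (delta_add : forall a b : D, delta (a + b) = delta a + delta b)
  (delta_mul : forall a b : D, delta (a * b) = sigma a * delta b + delta a * b)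
  (f : {poly D}) (f_monic : f \is monic) (f_deg : (2 < size f)%N) :
  (right_semi_invariant sigma delta f <->
     (forall a : D, nuc_r sigma delta f a%:P))
  /\
  (right_semi_invariant sigma delta f ->
     (forall x : {poly D}, petit_set f x ->
        (nuc sigma delta f x <-> exists a : D, x = a%:P))
     \/ petit_associative sigma delta f).
Proof.
split; first exact: right_semi_invariant_nuc_r.
move=> f_rsi; have [f_assoc|f_nonassoc] := classic (petit_associative sigma delta f).
  by right.
left=> x x_small; split=> [[_ [x_nuc_m _]]|[a ->]]; last exact: nuc_const.
have [x_le1|x_gt1] := leqP (size x) 1; first by exists x`_0; apply: size1_polyC.
case: f_nonassoc.
exact: (petit_associative_of_nuc_m delta_add delta_mul f_monic D_div x_small x_nuc_m x_gt1).
Qed.
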